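(* Let $n\ge1$; for $i\in[n]$ let $d_i\ge1$, $p_{i0}<\cdots<p_{id_i}$ reals, $f_i:\{p_{i0},\dots,p_{id_i}\}\to[L_i,U_i]$, and let $\phi:\prod_i[L_i,U_i]\to\mathbb{R}$ be supermodular. Let $\sigma=(\sigma_1,\dots,\sigma_n)$, each $\sigma_i$ a permutation of $\{0,\dots,d_i\}$ with $f_i(p_{i,\sigma_i(0)})\le\cdots\le f_i(p_{i,\sigma_i(d_i)})$. Define $h:\operatorname{vert}(\Delta)\to\mathbb{R}$ by $h(\boldsymbol{v}_{1j_1},\dots,\boldsymbol{v}_{nj_n})=\phi(f_1(p_{1,\sigma_1(j_1)}),\dots,f_n(p_{n,\sigma_n(j_n)}))$. Then $h$ is supermodular on $\operatorname{vert}(\Delta)$ with respect to the componentwise order.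
   Context: $\Delta^d=\{\boldsymbol{z}\in\mathbb{R}^d:1\ge z_1\ge\cdots\ge z_d\ge0\}$, $\Delta=\Delta^{d_1}\times\cdots\times\Delta^{d_n}$; the vertices of $\Delta^{d_i}$ are $\boldsymbol{v}_{i0}=\boldsymbol{0}$ and $\boldsymbol{v}_{ij}=\boldsymbol{v}_{i,j-1}+\boldsymbol{e}_{ij}$ (first $j$ coordinates equal to $1$), and $\operatorname{vert}(\Delta)=\prod_i\{\boldsymbol{v}_{i0},\dots,\boldsymbol{v}_{id_i}\}$, which is closed under componentwise max and min. A function $g$ is supermodular if $g(\boldsymbol{u}\vee\boldsymbol{w})+g(\boldsymbol{u}\wedge\boldsymbol{w})\ge g(\boldsymbol{u})+g(\boldsymbol{w})$ for all $\boldsymbol{u},\boldsymbol{w}$ in its domain. *)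

From HB Require Import structures.
From mathcomp Require Import all_boot all_order all_algebra all_fingroup.
From mathcomp Require Import reals.
Set Implicit Arguments. Unset Strict Implicit. Unset Printing Implicit Defensive.
Import Order.TTheory GRing.Theory Num.Theory.
Local Open Scope ring_scope.

(* A point of Delta = Delta^{d_1} x ... x Delta^{d_n} lives in
   prod_i R^{d_i}, represented as a dependent function. *)
Definition pt (R : realType) (n : nat) (d : 'I_n -> nat) :=
  forall i : 'I_n, 'I_(d i) -> R.

(* vertex v_{ij} of Delta^{d_i}: first j coordinates equal to 1, rest 0 *)
Definition vtx (R : realType) (m : nat) (j : 'I_m.+1) : 'I_m -> R :=
  fun k => if (nat_of_ord k < nat_of_ord j)%N then 1 else 0.

Definition vtxP (R : realType) (n : nat) (d : 'I_n -> nat)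
  (j : forall i : 'I_n, 'I_(d i).+1) : pt R d :=
  fun i => vtx R (j i).

Definition in_vert (R : realType) (n : nat) (d : 'I_n -> nat) (z : pt R d) : Prop :=
  exists j : forall i : 'I_n, 'I_(d i).+1, z = vtxP R j.

Definition pjoin (R : realType) (n : nat) (d : 'I_n -> nat) (u w : pt R d) : pt R d :=
  fun i k => Num.max (u i k) (w i k).
Definition pmeet (R : realType) (n : nat) (d : 'I_n -> nat) (u w : pt R d) : pt R d :=
  fun i k => Num.min (u i k) (w i k).

Definition vmax (R : realType) (n : nat) (x y : 'I_n -> R) : 'I_n -> R :=
  fun i => Num.max (x i) (y i).
Definition vmin (R : realType) (n : nat) (x y : 'I_n -> R) : 'I_n -> R :=
  fun i => Num.min (x i) (y i).

Definition supermodular_on_box (R : realType) (n : nat) (L U : 'I_n -> R)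
  (phi : ('I_n -> R) -> R) : Prop :=
  forall x y : 'I_n -> R,
    (forall i, L i <= x i <= U i) -> (forall i, L i <= y i <= U i) ->
    phi (vmax x y) + phi (vmin x y) >= phi x + phi y.

Definition supermodular_on_vert (R : realType) (n : nat) (d : 'I_n -> nat)
  (h : pt R d -> R) : Prop :=
  forall u w : pt R d, in_vert u -> in_vert w ->
    h (pjoin u w) + h (pmeet u w) >= h u + h w.

(* The vertices v_{i0}, ..., v_{id_i} of Delta^{d_i} form a chain, so
   vert(Delta) is a product of chains and componentwise max/min of vertices
   are computed index by index.  Because sigma_i sorts f_i o p_i, the map
   j |-> f_i(p_{i,sigma_i(j)}) is nondecreasing, and a nondecreasing map
   between chains commutes with max and min.  Hence h(u \/ w) = phi(x \/ y) and
   h(u /\ w) = phi(x /\ y), and supermodularity of phi on the box concludes. *)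
From HB Require Import structures.
From mathcomp Require Import all_boot all_order all_algebra all_fingroup.
From mathcomp Require Import reals.
From Stdlib Require Import FunctionalExtensionality.
Import Order.TTheory GRing.Theory Num.Theory.
Local Open Scope ring_scope.

Section MonotoneLattice.
Context {disp disp' : Order.disp_t} {T : orderType disp} {T' : orderType disp'}.
Context {g : T -> T'}.
Hypothesis g_homo : {homo g : x y / (x <= y)%O}.

Lemma homo_max x y : g (Order.max x y) = Order.max (g x) (g y).
Proof.
case: (leP x y) => [xy | /ltW yx]; first by rewrite max_r ?g_homo.
by rewrite max_l ?g_homo.
Qed.

Lemma homo_min x y : g (Order.min x y) = Order.min (g x) (g y).
Proof.
case: (leP x y) => [xy | /ltW yx]; first by rewrite min_l ?g_homo.
by rewrite min_r ?g_homo.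
Qed.

End MonotoneLattice.

Lemma vtx_homo (R : realType) {m : nat} (k : 'I_m) :
  {homo (fun j : 'I_m.+1 => vtx R j k) : a b / (a <= b)%O}.
Proof.
move=> a b; rewrite leEord /vtx => ab.
by case: ifP => [ka | _]; [rewrite (leq_trans ka ab) | case: ifP].
Qed.

Section VertexLattice.
Context {R : realType} {n : nat} {d : 'I_n -> nat}.
Variables j k : forall i : 'I_n, 'I_(d i).+1.

Lemma pjoin_vtxP :
  pjoin (vtxP R j) (vtxP R k) = vtxP R (fun i => Order.max (j i) (k i)).
Proof.
apply: functional_extensionality_dep => i.
apply: functional_extensionality => l.
by rewrite /pjoin /vtxP (homo_max (vtx_homo R l)).
Qed.

Lemma pmeet_vtxP :
  pmeet (vtxP R j) (vtxP R k) = vtxP R (fun i => Order.min (j i) (k i)).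
Proof.
apply: functional_extensionality_dep => i.
apply: functional_extensionality => l.
by rewrite /pmeet /vtxP (homo_min (vtx_homo R l)).
Qed.

Context {g : forall i : 'I_n, 'I_(d i).+1 -> R}.
Hypothesis g_homo : forall i : 'I_n, {homo (g i) : a b / (a <= b)%O}.

Lemma homo_vmax :
  (fun i => g i (Order.max (j i) (k i)))
  = vmax (fun i => g i (j i)) (fun i => g i (k i)).
Proof.
by apply: functional_extensionality => i; rewrite /vmax (homo_max (g_homo i)).
Qed.

Lemma homo_vmin :
  (fun i => g i (Order.min (j i) (k i)))
  = vmin (fun i => g i (j i)) (fun i => g i (k i)).
Proof.
by apply: functional_extensionality => i; rewrite /vmin (homo_min (g_homo i)).
Qed.

End VertexLattice.

Theorem mainTheorem11 (R : realType) (n : nat) (d : 'I_n -> nat)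
  (p : forall i : 'I_n, 'I_(d i).+1 -> R)
  (L U : 'I_n -> R) (f : forall i : 'I_n, R -> R)
  (phi : ('I_n -> R) -> R)
  (sigma : forall i : 'I_n, {perm 'I_(d i).+1})
  (h : pt R d -> R) :
  (0 < n)%N ->
  (forall i, (0 < d i)%N) ->
  (forall i (j k : 'I_(d i).+1), (j < k)%N -> p i j < p i k) ->
  (forall i (j : 'I_(d i).+1), L i <= f i (p i j) <= U i) ->
  supermodular_on_box L U phi ->
  (forall i (j k : 'I_(d i).+1), (j <= k)%N ->
     f i (p i (sigma i j)) <= f i (p i (sigma i k))) ->
  (forall j : forall i : 'I_n, 'I_(d i).+1,
     h (vtxP R j) = phi (fun i => f i (p i (sigma i (j i))))) ->
  supermodular_on_vert h.
Proof.
move=> _ _ _ f_box phi_super f_sorted hE u w [j ->] [k ->].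
pose g i (a : 'I_(d i).+1) := f i (p i (sigma i a)).
have g_homo i : {homo (g i) : a b / (a <= b)%O}.
  by move=> a b; rewrite leEord; apply: f_sorted.
rewrite pjoin_vtxP pmeet_vtxP !hE.
have := phi_super _ _ (fun i => f_box i (sigma i (j i)))
                      (fun i => f_box i (sigma i (k i))).
by rewrite -(homo_vmax j k g_homo) -(homo_vmin j k g_homo).
Qed.
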